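(* Let $X$ be a real Banach space. The following statements are equivalent. (1) $X$ is CLUR. (2) $S_X$ is sup-compact on $X\setminus\{0\}$. (3) For every $x\in X\setminus\{0\}$, $Q_{S_X}(x)$ is compact and $Q_{S_X}(x,\frac1n)\xrightarrow{V}Q_{S_X}(x)$. (4) For every $x\in X\setminus\{0\}$, $Q_{S_X}(x)$ is compact and $Q_{S_X}(x,\frac1n)\xrightarrow{H}Q_{S_X}(x)$. (5) $Q_{S_X}(x)$ is compact for every $x\in X\setminus\{0\}$ and $S_X$ is strongly remotal on $X\setminus\{0\}$. (6) $\alpha(Q_{S_X}(x,\frac1n))\to 0$ for every $x\in X\setminus\{0\}$.
   Context: $B_X,S_X$ are the closed unit ball and unit sphere of $X$. For non-empty bounded $F$, $x\in X$, $\delta\ge0$: $r(F,x)=\sup_{y\in F}\|x-y\|$, $Q_F(x,\delta)=\{y\in F:\|x-y\|\ge r(F,x)-\delta\}$, $Q_F(x)=Q_F(x,0)$. $F$ is sup-compact on $A$ if for each $x\in A$ every sequence $(y_n)$ in $F$ with $\|x-y_n\|\to r(F,x)$ has a subsequence converging to an element of $F$. $F$ is strongly remotal on $A$ if for every $x\in A$ and $\epsilon>0$ there is $\delta>0$ with $Q_F(x,\delta)\subseteq Q_F(x)+\epsilon B_X$. $X$ is CLUR if whenever $x\in S_X$ and $(x_n)\subseteq S_X$ satisfy $\|\frac{x_n+x}{2}\|\to1$, $(x_n)$ has a convergent subsequence. For closed bounded sets $C_n,C_0$: $C_n\xrightarrow{V}C_0$ means both (a) for every open $U\supseteq C_0$,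 eventually $C_n\subseteq U$, and (b) for every open $U$ with $C_0\cap U\ne\emptyset$, eventually $C_n\cap U\neq\emptyset$; $C_n\xrightarrow{H}C_0$ means for every $\epsilon>0$, eventually $C_n\subseteq C_0+\epsilon B_X$ and $C_0\subseteq C_n+\epsilon B_X$. The Kuratowski measure of non-compactness is $\alpha(A)=\inf\{\epsilon>0: A\subseteq E+\epsilon B_X$ for some finite $E\subseteq X\}$. *)

From HB Require Import structures.
From mathcomp Require Import all_boot all_order all_algebra.
From mathcomp Require Import all_classical all_reals all_analysis.
Set Implicit Arguments. Unset Strict Implicit. Unset Printing Implicit Defensive.
Import Order.TTheory GRing.Theory Num.Theory.
Import numFieldNormedType.Exports.
Local Open Scope classical_set_scope.
Local Open Scope ring_scope.

Section Defs.
Context {R : realType} {X : normedModType R}.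

Definition unit_ball : set X := [set x | `|x| <= 1].
Definition unit_sphere : set X := [set x | `|x| = 1].

Definition farthest_dist (F : set X) (x : X) : R :=
  sup [set `|x - y| | y in F].

Definition Qset (F : set X) (x : X) (delta : R) : set X :=
  [set y | F y /\ farthest_dist F x - delta <= `|x - y|].

Definition add_ball (C : set X) (eps : R) : set X :=
  [set z | exists q b, [/\ C q, unit_ball b & z = q + eps *: b]].

Definition subsequence (phi : nat -> nat) : Prop :=
  forall m n, (m < n)%N -> (phi m < phi n)%N.

Definition sup_compact (F A : set X) : Prop :=
  forall x, A x -> forall y : nat -> X, (forall n, F (y n)) ->
    (fun n => `|x - y n|) @ \oo --> farthest_dist F x ->
    exists phi, subsequence phi /\ exists z, F z /\ (y \o phi) @ \oo --> z.

Definition strongly_remotal (F A : set X) : Prop :=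
  forall x, A x -> forall eps : R, 0 < eps -> exists delta : R, 0 < delta /\
    Qset F x delta `<=` add_ball (Qset F x 0) eps.

Definition CLUR : Prop :=
  forall (x : X) (xn : nat -> X), unit_sphere x -> (forall n, unit_sphere (xn n)) ->
    (fun n => `|(2 : R)^-1 *: (xn n + x)|) @ \oo --> (1 : R) ->
    exists phi, subsequence phi /\ exists z : X, (xn \o phi) @ \oo --> z.

Definition vietoris_cvg (C : nat -> set X) (C0 : set X) : Prop :=
  (forall U : set X, open U -> C0 `<=` U -> \forall n \near \oo, C n `<=` U) /\
  (forall U : set X, open U -> C0 `&` U !=set0 -> \forall n \near \oo, C n `&` U !=set0).

Definition hausdorff_cvg (C : nat -> set X) (C0 : set X) : Prop :=
  forall eps : R, 0 < eps -> \forall n \near \oo,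
    C n `<=` add_ball C0 eps /\ C0 `<=` add_ball (C n) eps.

(* Kuratowski measure of non-compactness, valued in extended reals (+oo if no finite cover) *)
Definition kuratowski (A : set X) : \bar R :=
  ereal_inf [set (e%:E) | e in [set e : R | 0 < e /\
     exists E : set X, finite_set E /\ A `<=` add_ball E e]].

End Defs.

(* For x <> 0 the point of the unit sphere farthest from x is -x/|x|, at distance
   |x| + 1, and with u = x/|x| the gap |x| + 1 - |x - y| dominates
   min(1, |x|) (2 - |u - y|) for every y on the sphere.  Hence the maximizing
   sequences for x are, up to sign, the CLUR sequences for u, and CLUR means that
   the sphere is sup-compact on X \ {0}.

   For a closed bounded set F, sup-compactness at x amounts to: for every e > 0 some
   Q_F(x, 1/n) has a finite e-net, i.e. alpha(Q_F(x, 1/n)) -> 0.  Such nets make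
   ultrafilters on Q_F(x, 1/n) Cauchy, so completeness yields compactness of Q_F(x)
   and convergent subsequences of maximizing sequences; conversely, a maximizing
   sequence whose terms are e-far from all their predecessors has no Cauchy
   subsequence.  Sup-compactness also pushes Q_F(x, 1/n) eventually into every
   neighbourhood of Q_F(x), which gives Vietoris and Hausdorff convergence and strong
   remotality; each of these, together with compactness of Q_F(x), gives back the
   finite nets. *)

From mathcomp Require Import all_boot all_order all_algebra.
From mathcomp Require Import all_classical all_reals all_analysis.
From mathcomp Require Import lra finmap.
Set Implicit Arguments. Unset Strict Implicit. Unset Printing Implicit Defensive.
Import Order.TTheory GRing.Theory Num.Theory.
Import numFieldNormedType.Exports.
Local Open Scope classical_set_scope.
Local Open Scope ring_scope.

Section subsequences.
Context {R : realType} {X : normedModType R}.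

Lemma lef_natSinv (m n : nat) : (m <= n)%N -> n.+1%:R^-1 <= m.+1%:R^-1 :> R.
Proof. by move=> mn; rewrite lef_pV2 ?posrE // ler_nat ltnS. Qed.

Lemma cvg_natSinv_dist (u : nat -> X) (z : X) :
  (forall n, `|z - u n| <= n.+1%:R^-1) -> u @ \oo --> z.
Proof.
move=> uz; apply/cvgrPdist_le => e e0.
have [N _ Ne] := near_infty_natSinv_lt (PosNum e0).
by exists N => // n /= Nn; apply: le_trans (uz n) (ltW (Ne n Nn)).
Qed.

Lemma subsequence_ge phi : subsequence phi -> forall n, (n <= phi n)%N.
Proof. by move=> sphi; elim=> // n IHn; apply: leq_ltn_trans IHn (sphi _ _ _). Qed.

Lemma subsequence_cvg phi : subsequence phi -> phi @ \oo --> \oo.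
Proof.
move=> sphi A [N _ NA]; exists N => // n /= Nn.
exact/NA/(leq_trans Nn (subsequence_ge sphi n)).
Qed.

Lemma cluster_subsequence (u : nat -> X) (z : X) : cluster (u @ \oo) z ->
  exists phi, subsequence phi /\ (u \o phi) @ \oo --> z.
Proof.
move=> uz.
have /choice [g gP] : forall kN : nat * nat,
    exists n, (kN.2 <= n)%N /\ `|z - u n| <= kN.1.+1%:R^-1.
  move=> [k N]; have k0 : 0 < k.+1%:R^-1 :> R by rewrite invr_gt0.
  have tail : (u @ \oo) [set u n | n in [set n | (N <= n)%N]].
    by exists N => // n Nn; exists n.
  have [_ [[n Nn <-]]] := uz _ _ tail (nbhsx_ballx z _ k0).
  by rewrite -ball_normE /= => /ltW; exists n.
pose phi := fix phi k := if k is k'.+1 then g (k, (phi k').+1) else g (0, 0)%N.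
have phiS k : (phi k < phi k.+1)%N by have [] := gP (k.+1, (phi k).+1).
exists phi; split; first by move=> m n; apply: (homo_ltn ltn_trans phiS).
apply: cvg_natSinv_dist => -[|k] /=; first by have [] := gP (0, 0)%N.
by have [] := gP (k.+1, (phi k).+1).
Qed.

End subsequences.

Section add_ball.
Context {R : realType} {X : normedModType R}.

Lemma add_ballP (C : set X) (e : R) (w : X) : 0 < e ->
  add_ball C e w <-> exists2 q, C q & `|q - w| <= e.
Proof.
move=> e0; split=> [[q [b [Cq Bb ->]]]|[q Cq qw]].
  exists q => //; rewrite opprD addrA subrr add0r normrN normrZ gtr0_norm //.
  by rewrite -[leRHS]mulr1 ler_wpM2l // ltW.
exists q, (e^-1 *: (w - q)); split => //.
  by rewrite /unit_ball /= normrZ gtr0_norm ?invr_gt0 // distrC ler_pdivrMl // mulr1.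
by rewrite scalerA mulfV ?gt_eqF // scale1r addrC subrK.
Qed.

Lemma sub_add_ball (C : set X) (e : R) : C `<=` add_ball C e.
Proof.
move=> w Cw; exists w, 0; split => //; last by rewrite scaler0 addr0.
by rewrite /unit_ball /= normr0.
Qed.

Lemma le_add_ball (C : set X) (e1 e2 : R) : 0 < e1 -> e1 <= e2 ->
  add_ball C e1 `<=` add_ball C e2.
Proof.
move=> e10 e12 w /(add_ballP _ _ e10) [q Cq qw].
by apply/(add_ballP _ _ (lt_le_trans e10 e12)); exists q; last exact: le_trans e12.
Qed.

Lemma vietoris_cvg_near_add_ball (C : nat -> set X) (C0 : set X) (e : R) :
  vietoris_cvg C C0 -> 0 < e -> \forall n \near \oo, C n `<=` add_ball C0 e.
Proof.
move=> [upper _] e0; pose U := \bigcup_(q in C0) ball q e.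
have oU : open U by apply: bigcup_open => q _; exact: ball_open.
have C0U : C0 `<=` U by move=> q C0q; exists q => //; exact: ballxx.
apply: filterS (upper U oU C0U) => n CU w /CU [q C0q].
by rewrite -ball_normE /= => /ltW qw; apply/add_ballP => //; exists q.
Qed.

End add_ball.

Section small_nets.
Context {R : realType} {X : normedModType R}.

Definition has_small_nets (C : nat -> set X) : Prop :=
  forall e : R, 0 < e -> exists n (s : seq X), C n `<=` add_ball [set` s] e.

Lemma kuratowski_ge0 (A : set X) : (0 <= kuratowski A)%E.
Proof. by apply: le_ereal_inf_tmp => _ [e [e0 _] <-]; rewrite lee_fin ltW. Qed.

Lemma kuratowski_le_net (A : set X) (e : R) (s : seq X) : 0 < e ->
  A `<=` add_ball [set` s] e -> (kuratowski A <= e%:E)%E.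
Proof.
move=> e0 As; apply: ereal_inf_lbound; exists e => //; split => //.
by exists [set` s]; split => //; exact: finite_seq.
Qed.

Lemma kuratowski_lt_net (A : set X) (e : R) : 0 < e -> (kuratowski A < e%:E)%E ->
  exists s : seq X, A `<=` add_ball [set` s] e.
Proof.
move=> e0 /ereal_inf_lt [_ [e' [e'0 [E [fE AE]]] <-]]; rewrite lte_fin => e'e.
have [s Es] := (finite_seqP E).1 fE.
by exists s; rewrite -Es; apply: subset_trans AE (le_add_ball e'0 (ltW e'e)).
Qed.

Lemma small_nets_kuratowski_cvg0 (C : nat -> set X) :
  (forall m n, (m <= n)%N -> C n `<=` C m) -> has_small_nets C ->
  kuratowski (C n) @[n --> \oo] --> 0%E.
Proof.
move=> Cdecr nets.
have ev e : 0 < e -> \forall n \near \oo, (kuratowski (C n) <= e%:E)%E.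
  move=> e0; have [N [s Ns]] := nets e e0; exists N => // n /= Nn.
  exact: kuratowski_le_net e0 (subset_trans (Cdecr _ _ Nn) Ns).
apply/fine_cvgP; split.
  apply: filterS (ev 1 ltr01) => n Cn1.
  by rewrite ge0_fin_numE ?kuratowski_ge0 // (le_lt_trans Cn1) ?ltry.
apply/cvgrPdist_le => e e0; apply: filterS (ev e e0) => n /=.
have := kuratowski_ge0 (C n); case: (kuratowski (C n)) => //= r.
by rewrite !lee_fin sub0r normrN => /ger0_norm ->.
Qed.

Lemma kuratowski_cvg0_small_nets (C : nat -> set X) :
  kuratowski (C n) @[n --> \oo] --> 0%E -> has_small_nets C.
Proof.
move=> /fine_cvgP [finC /cvgrPdist_lt kC] e e0.
have [n /= [fn]] := filter_ex (filterI finC (kC e e0)).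
rewrite sub0r normrN => kn; exists n; apply: kuratowski_lt_net e0 _.
by rewrite -(fineK fn) lte_fin (le_lt_trans (ler_norm _) kn).
Qed.

End small_nets.

Section farthest_points.
Context {R : realType} {X : normedModType R} (F : set X).
Hypotheses (closedF : closed F) (boundedF : bounded_set F).

Lemma le_Qset (x : X) (d1 d2 : R) : d1 <= d2 -> Qset F x d1 `<=` Qset F x d2.
Proof. by move=> d12 y [Fy le_y]; split => //; apply: le_trans le_y; rewrite lerB. Qed.

Lemma dist_le_farthest_dist (x y : X) : F y -> `|x - y| <= farthest_dist F x.
Proof.
move=> Fy; have [M [_ FM]] := boundedF.
have /FM FM1 : M + 1 > M by rewrite ltrDl.
apply: sup_upper_bound; last by exists y.
split; first by exists `|x - y|, y.
by exists (`|x| + (M + 1)) => _ [z /FM1 Fz <-]; rewrite (le_trans (ler_normB _ _)) ?lerD.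
Qed.

Lemma closed_Qset (x : X) (d : R) : closed (Qset F x d).
Proof.
have dist_cont : continuous (fun y => `|x - y|).
  by move=> y; apply: cvg_norm; apply: (@cvgB _ _ _ _ _ (cst x) id) => //; exact: cvg_cst.
apply: closedI closedF _.
exact: preimage_closed (fun y _ => dist_cont y) (@closed_ge _ (farthest_dist F x - d)).
Qed.

Lemma farthest_dist_Qset_cvg (x : X) (y : nat -> X) :
  (forall n, Qset F x n.+1%:R^-1 (y n)) ->
  `|x - y n| @[n --> \oo] --> farthest_dist F x.
Proof.
move=> Qy; apply: cvg_natSinv_dist => n; have [Fy le_y] := Qy n.
rewrite ger0_norm ?subr_ge0 ?dist_le_farthest_dist //.
by rewrite lerBlDr addrC -lerBlDr.
Qed.

Lemma maximizing_limit_Qset0 (x : X) (y : nat -> X) (z : X) : (forall n, F (y n)) ->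
  `|x - y n| @[n --> \oo] --> farthest_dist F x -> y @ \oo --> z ->
  Qset F x 0 z.
Proof.
move=> Fy yx yz; split; first exact: closed_cvg F closedF (nearW _ Fy) z yz.
have xz : `|x - y n| @[n --> \oo] --> `|x - z|.
  by apply: cvg_norm; apply: cvgB yz; exact: cvg_cst.
by rewrite subr0 (cvg_unique _ yx xz).
Qed.

Section sup_compact_at.
Variables (A : set X) (x : X).
Hypotheses (scF : sup_compact F A) (Ax : A x).
Local Notation Q d := (Qset F x d).

Lemma sup_compact_Qset_near_sub (T : set X) : (forall z, Q 0 z -> nbhs z T) ->
  \forall n \near \oo, Q n.+1%:R^-1 `<=` T.
Proof.
move=> QT; suff [N QNT] : exists N, Q N.+1%:R^-1 `<=` T.
  by exists N => // n /= Nn; apply: subset_trans QNT; exact/le_Qset/lef_natSinv.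
apply: contrapT => /forallNP QnotT.
have /choice [y yP] : forall N, exists y, Q N.+1%:R^-1 y /\ ~ T y.
  by move=> N; have /existsNP [y /not_implyP] := QnotT N; exists y.
have Fy n : F (y n) by have [[]] := yP n.
have yx := farthest_dist_Qset_cvg (fun n => (yP n).1).
have [phi [sphi [z [_ yz]]]] := scF Ax Fy yx.
have yphix := cvg_comp _ _ (subsequence_cvg sphi) yx.
have Qz : Q 0 z := maximizing_limit_Qset0 (fun n => Fy (phi n)) yphix yz.
by have [N _ NT] := yz T (QT z Qz); exact: (yP (phi N)).2 (NT N (leqnn N)).
Qed.

Lemma sup_compact_Qset_near_add_ball (e : R) : 0 < e ->
  \forall n \near \oo, Q n.+1%:R^-1 `<=` add_ball (Q 0) e.
Proof.
move=> e0; apply: sup_compact_Qset_near_sub => z Qz; apply/nbhs_ballP.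
exists e => // w; rewrite -ball_normE /= => zw.
by apply/add_ballP => //; exists z; last exact: ltW.
Qed.

Lemma sup_compact_vietoris : vietoris_cvg (fun n => Q n.+1%:R^-1) (Q 0).
Proof.
split=> [U oU QU | U _ [w [Qw Uw]]].
  by apply: sup_compact_Qset_near_sub => z Qz; apply: open_nbhs_nbhs; split => //; exact: QU.
by apply: nearW => n; exists w; split => //; apply: le_Qset Qw; rewrite invr_ge0.
Qed.

Lemma sup_compact_hausdorff : hausdorff_cvg (fun n => Q n.+1%:R^-1) (Q 0).
Proof.
move=> e e0; apply: filterS (sup_compact_Qset_near_add_ball e0) => n Qn.
split=> // w Qw; apply: sub_add_ball; apply: le_Qset Qw.
by rewrite invr_ge0.
Qed.

Lemma sup_compact_small_nets : has_small_nets (fun n => Q n.+1%:R^-1).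
Proof.
move=> e e0; apply: contrapT => /forallNP nonets.
(* Each y n lies e-far from all earlier terms, so no subsequence of y is Cauchy. *)
have /choice [f fP] : forall ns : nat * seq X,
    exists y, Q ns.1.+1%:R^-1 y /\ ~ add_ball [set` ns.2] e y.
  move=> [n s]; have /forallNP/(_ s)/existsNP [y /not_implyP] := nonets n.
  by exists y.
pose s := fix s n := if n is n'.+1 then f (n', s n') :: s n' else [::].
pose y n := f (n, s n).
have ys i n : (i < n)%N -> y i \in s n.
  elim: n => // n IHn; rewrite ltnS leq_eqVlt => /orP[/eqP->|lt_in].
    by rewrite /= in_cons eqxx.
  by rewrite /= in_cons IHn ?orbT.
have Qy n : Q n.+1%:R^-1 (y n) := (fP (n, s n)).1.
have Fy n : F (y n) by case: (Qy n).
have [phi [sphi [z [_ yz]]]] := scF Ax Fy (farthest_dist_Qset_cvg Qy).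
have e20 : 0 < e / 2 by rewrite divr_gt0.
have [N _ Nz] := (cvgrPdist_lt _ _).1 yz _ e20.
apply: (fP (phi N.+1, s (phi N.+1))).2.
apply/add_ballP => //; exists (y (phi N)); first exact/ys/sphi.
have := ltrD (Nz N (leqnn N)) (Nz N.+1 (leqnSn N)); rewrite -splitr /= => /ltW.
by apply: le_trans; rewrite (distrC z); exact: ler_distD.
Qed.

End sup_compact_at.

Lemma compact_remotal_small_nets (x : X) : compact (Qset F x 0) ->
  (forall e : R, 0 < e -> exists d : R, 0 < d /\
     Qset F x d `<=` add_ball (Qset F x 0) e) ->
  has_small_nets (fun n => Qset F x n.+1%:R^-1).
Proof.
move=> cQ remotal e e0; have e20 : 0 < e / 2 by rewrite divr_gt0.
move: cQ; rewrite compact_cover => /(_ X (Qset F x 0) (fun z => ball z (e / 2))).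
case=> [z _|z Qz|D _ cover]; [exact: ball_open | by exists z => //; exact: ballxx |].
have [d [d0 Qd]] := remotal _ e20; have [N _ Nd] := near_infty_natSinv_lt (PosNum d0).
exists N, (enum_fset D); move=> w /(le_Qset (ltW (Nd N (leqnn N))))/Qd.
move=> /(add_ballP _ _ e20) [q Qq qw].
have [c cD] := cover q Qq; rewrite -ball_normE /= => cq.
apply/add_ballP => //; exists c => //.
by rewrite (splitr e); apply: le_trans (ler_distD q c w) _; rewrite lerD // ltW.
Qed.

Lemma near_sub_strongly_remotal (A : set X) :
  (forall x, A x -> forall e : R, 0 < e ->
     \forall n \near \oo, Qset F x n.+1%:R^-1 `<=` add_ball (Qset F x 0) e) ->
  strongly_remotal F A.
Proof.
move=> near_sub x Ax e e0; have [N _ NQ] := near_sub x Ax e e0.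
by exists N.+1%:R^-1; split; [rewrite invr_gt0 | exact: NQ N (leqnn N)].
Qed.

End farthest_points.

Lemma ultra_bigcup_seq {T : Type} {I : eqType} (G : set_system T) (P : I -> set T)
    (s : seq I) : UltraFilter G ->
  G (\bigcup_(i in [set` s]) P i) -> exists2 i, i \in s & G (P i).
Proof.
move=> UG; elim: s => [|i s IHs] Gs.
  by have /filter_not_empty : G set0 by apply: filterS Gs => y [].
have [GPi|GnPi] := in_ultra_setVsetC (P i) UG; first by exists i; rewrite ?mem_head.
have [j js GPj] : exists2 j, j \in s & G (P j).
  apply: IHs; apply: filterS (filterI Gs GnPi) => y [[j /=]].
  by rewrite in_cons => /orP[/eqP-> //|js Pjy _]; exists j.
by exists j; rewrite // in_cons js orbT.
Qed.

Section complete_space.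
Context {R : realType} {X : completeNormedModType R}.

Lemma ultra_small_nets_cvg (G : set_system X) : UltraFilter G ->
  (forall e : R, 0 < e -> exists s : seq X, G (add_ball [set` s] e)) ->
  exists p : X, G --> p.
Proof.
move=> UG nets; suff /cvg_ex : cvg G by [].
apply: cauchy_cvg; apply: cauchy_exP => e e0.
have e20 : 0 < e / 2 by rewrite divr_gt0.
have [s Gs] := nets _ e20.
have [c _ Gc] : exists2 c, c \in s & G (ball c e).
  apply: ultra_bigcup_seq; apply: filterS Gs => y /(add_ballP _ _ e20) [q sq qy].
  exists q => //; rewrite -ball_normE /=; apply: le_lt_trans qy _.
  by rewrite ltr_pdivrMr // ltr_pMr // ltr1n.
by exists c.
Qed.

Variables (F : set X).
Hypothesis closedF : closed F.

Lemma small_nets_compact_Qset (x : X) :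
  has_small_nets (fun n => Qset F x n.+1%:R^-1) -> compact (Qset F x 0).
Proof.
move=> nets; rewrite compact_ultra => G UG GQ.
have [p Gp] : exists p : X, G --> p.
  apply: (ultra_small_nets_cvg UG) => e e0; have [n [s Qs]] := nets e e0; exists s.
  by apply: filterS GQ => w Qw; apply/Qs/(le_Qset _ Qw); rewrite invr_ge0.
exists p; split => //; apply: (closed_Qset closedF) => B /Gp GB.
exact: filter_ex (filterI GQ GB).
Qed.

Lemma small_nets_sup_compact (A : set X) :
  (forall x, A x -> has_small_nets (fun n => Qset F x n.+1%:R^-1)) ->
  sup_compact F A.
Proof.
move=> nets x Ax y Fy yx.
have [G [UG yG]] := @ultraFilterLemma _ (y @ \oo) _.
have [p Gp] : exists p : X, G --> p.
  apply: (ultra_small_nets_cvg UG) => e e0; have [n [s Qs]] := nets x Ax e e0.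
  exists s; apply: yG; have n0 : 0 < n.+1%:R^-1 :> R by rewrite invr_gt0.
  apply: filterS ((cvgrPdist_le _ _).1 yx _ n0) => m /(le_trans (ler_norm _)) yxm.
  by apply: Qs; split => //; rewrite lerBlDr addrC -lerBlDr.
have [phi [sphi yp]] : exists phi, subsequence phi /\ (y \o phi) @ \oo --> p.
  by apply: cluster_subsequence => B C yB pC; exact: filter_ex (filterI (yG _ yB) (Gp _ pC)).
exists phi; split => //; exists p; split => //.
exact: closed_cvg _ closedF (nearW _ (fun n => Fy (phi n))) p yp.
Qed.

End complete_space.

Section unit_sphere.
Context {R : realType} {X : normedModType R}.
Local Notation S := (@unit_sphere R X).

Lemma closed_unit_sphere : closed S.
Proof.
exact: (@preimage_closed X R (fun y : X => `|y|) _
  (fun y _ => @norm_continuous _ _ y) (@closed_eq _ 1)).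
Qed.

Lemma bounded_unit_sphere : bounded_set S.
Proof. by exists 1; split => // M M1 y /= ->; exact: ltW. Qed.

Lemma unit_sphere_normalize (x : X) : x != 0 -> S (`|x|^-1 *: x).
Proof. by move=> x0; rewrite /unit_sphere /= normrZ normfV normr_id mulVf ?normr_eq0. Qed.

Lemma farthest_dist_unit_sphere (x : X) : x != 0 -> farthest_dist S x = `|x| + 1.
Proof.
move=> x0; have nx0 : 0 < `|x| by rewrite normr_gt0.
set y0 := - (`|x|^-1 *: x).
have Sy0 : S y0 by rewrite /unit_sphere /= normrN; exact: unit_sphere_normalize.
have xy0 : `|x - y0| = `|x| + 1.
  rewrite opprK -{1}(scale1r x) -scalerDl normrZ ger0_norm ?addr_ge0 ?invr_ge0 //.
  by rewrite mulrDl mul1r mulVf ?gt_eqF.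
apply/eqP; rewrite eq_le; apply/andP; split.
  apply: ge_sup; first by exists `|x - y0|, y0.
  by move=> _ [y Sy <-]; rewrite -Sy ler_normB.
by rewrite -xy0 (dist_le_farthest_dist bounded_unit_sphere).
Qed.

Lemma unit_sphere_gap (a : R) (u y : X) : 0 < a -> S u -> S y ->
  Num.min 1 a * (2 - `|u - y|) <= a + 1 - `|a *: u - y|.
Proof.
move=> a0 Su Sy; have [a1|a1] := leP 1 a.
  have : `|a *: u - y| <= `|u - y| + (a - 1).
    have -> : a *: u - y = (u - y) + (a - 1) *: u.
      by rewrite scalerBl scale1r [RHS]addrC addrA subrK.
    by rewrite (le_trans (ler_normD _ _)) // normrZ Su mulr1 ger0_norm ?subr_ge0.
  by lra.
have : `|a *: u - y| <= a * `|u - y| + (1 - a).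
  have -> : a *: u - y = a *: (u - y) + (1 - a) *: (- y).
    by rewrite scalerBr scalerBl scale1r scalerN opprK addrACA addNr addr0.
  rewrite (le_trans (ler_normD _ _)) // !normrZ normrN Sy mulr1.
  by rewrite (ger0_norm (ltW a0)) ger0_norm // subr_ge0 ltW.
by nra.
Qed.

Lemma CLUR_sup_compact : @CLUR R X -> sup_compact S [set x | x != 0].
Proof.
move=> clur x x0 y Sy yx.
have a0 : 0 < `|x| by rewrite normr_gt0.
set u := `|x|^-1 *: x; have Su : S u := unit_sphere_normalize x0.
have xu : x = `|x| *: u by rewrite /u scalerA mulfV ?gt_eqF // scale1r.
have Sny n : S (- y n) by rewrite /unit_sphere /= normrN; exact: Sy.
have uy : `|2^-1 *: (- y n + u)| @[n --> \oo] --> (1 : R).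
  apply/cvgrPdist_le => e e0; have m0 : 0 < Num.min 1 `|x| by rewrite lt_min ltr01.
  have me0 : 0 < Num.min 1 `|x| * (2 * e) by rewrite !mulr_gt0.
  rewrite farthest_dist_unit_sphere // in yx.
  apply: filterS ((cvgrPdist_le _ _).1 yx _ me0) => n yxn.
  have gap := unit_sphere_gap a0 Su (Sy n); rewrite -xu in gap.
  have le2 : `|u - y n| <= 2 by rewrite (le_trans (ler_normB _ _)) // Su Sy.
  have : 2 - `|u - y n| <= 2 * e.
    by rewrite -(ler_pM2l m0); apply: le_trans gap (le_trans (ler_norm _) yxn).
  rewrite normrZ ger0_norm ?invr_ge0 // [- _ + u]addrC ger0_norm; first lra.
  by rewrite subr_ge0 ler_pdivrMl // mulr1.
have [phi [sphi [z yz]]] := clur u (fun n => - y n) Su Sny uy.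
have yz' : (y \o phi) @ \oo --> - z.
  rewrite (_ : y \o phi = - ((fun n => - y n) \o phi)); first exact: cvgN.
  by apply/funext => n /=; rewrite opprK.
exists phi; split => //; exists (- z); split => //.
exact: closed_cvg _ closed_unit_sphere (nearW _ (fun n => Sy (phi n))) _ yz'.
Qed.

Lemma sup_compact_CLUR : sup_compact S [set x | x != 0] -> @CLUR R X.
Proof.
move=> sc x xn Sx Sxn xnx.
have nx0 : - x != 0 by rewrite oppr_eq0 -normr_gt0 Sx.
have dist_cvg : `|- x - xn n| @[n --> \oo] --> farthest_dist S (- x).
  rewrite farthest_dist_unit_sphere // normrN Sx.
  have -> : (fun n => `|- x - xn n|) = (fun n => 2 * `|2^-1 *: (xn n + x)|).
    apply/funext => n; rewrite normrZ ger0_norm ?invr_ge0 // mulrA divff // mul1r.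
    by rewrite -opprD normrN addrC.
  by rewrite -[1 + 1]mulr1; exact: cvgMl_tmp.
have [phi [sphi [z [_ xnz]]]] := sc (- x) nx0 xn Sxn dist_cvg.
by exists phi; split => //; exists z.
Qed.

End unit_sphere.

Theorem theorem3p4 (R : realType) (X : completeNormedModType R) :
  let S := @unit_sphere R X in
  let X0 := [set x : X | x != 0] in
  let P1 := @CLUR R X in
  let P2 := sup_compact S X0 in
  let P3 := forall x : X, X0 x -> compact (Qset S x 0) /\
              vietoris_cvg (fun n => Qset S x (n.+1%:R)^-1) (Qset S x 0) in
  let P4 := forall x : X, X0 x -> compact (Qset S x 0) /\
              hausdorff_cvg (fun n => Qset S x (n.+1%:R)^-1) (Qset S x 0) in
  let P5 := (forall x : X, X0 x -> compact (Qset S x 0)) /\ strongly_remotal S X0 in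
  let P6 := forall x : X, X0 x ->
              (fun n => kuratowski (Qset S x (n.+1%:R)^-1)) @ \oo --> 0%E in
  [/\ P1 <-> P2, P1 <-> P3, P1 <-> P4, P1 <-> P5 & P1 <-> P6].
Proof.
move=> S X0 P1 P2 P3 P4 P5 P6.
have cS : closed S := closed_unit_sphere.
have bS : bounded_set S := bounded_unit_sphere.
have P12 : P1 <-> P2 by split; [exact: CLUR_sup_compact | exact: sup_compact_CLUR].
have P2_nets (sc : P2) x (x0 : X0 x) := sup_compact_small_nets bS sc x0.
have P2_compact (sc : P2) x (x0 : X0 x) := small_nets_compact_Qset cS (P2_nets sc x x0).
have nets_P2 := small_nets_sup_compact cS (A := X0).
have P52 : P5 -> P2.
  move=> [cQ sr]; apply: nets_P2 => x x0.
  exact: compact_remotal_small_nets (cQ x x0) (sr x x0).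
split=> //.
- split=> [/P12 sc x x0 | P3h].
    by split; [exact: P2_compact | exact (sup_compact_vietoris cS bS sc x0)].
  apply/P12/P52; split=> [x /P3h [] //|].
  apply: near_sub_strongly_remotal => x /P3h [_ vQ] e e0.
  exact: vietoris_cvg_near_add_ball vQ e0.
- split=> [/P12 sc x x0 | P4h].
    by split; [exact: P2_compact | exact (sup_compact_hausdorff cS bS sc x0)].
  apply/P12/P52; split=> [x /P4h [] //|].
  apply: near_sub_strongly_remotal => x /P4h [_ hQ] e e0.
  by apply: filterS (hQ e e0) => n [].
- split=> [/P12 sc | /P52/P12 //]; split=> [x x0|]; first exact: P2_compact.
  apply: near_sub_strongly_remotal => x x0 e e0.
  exact (sup_compact_Qset_near_add_ball cS bS sc x0 e0).
- split=> [/P12 sc x x0 | P6h].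
    apply: small_nets_kuratowski_cvg0 (P2_nets sc x x0) => m n mn.
    exact/le_Qset/lef_natSinv.
  by apply/P12/nets_P2 => x x0; exact: kuratowski_cvg0_small_nets (P6h x x0).
Qed.
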